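(* Let $\Gamma$ be a splice diagram satisfying the edge determinant condition and let $a,b$ be two adjacent nodes of $\Gamma$. Let $P_a$ (resp. $P_b$) be the set of leaves $\lambda$ of $\Gamma$ with $a\in[\lambda,b]$ (resp. $b\in[\lambda,a]$). Then: (1) $\beta^{a}_{P_a}=\beta^{b}_{P_a}$ and $\beta^{a}_{P_b}=\beta^{b}_{P_b}$; denote these points $\beta_{P_a}$ and $\beta_{P_b}$. (2) The points $\rho(a)$ and $\rho(b)$ lie on the segment $[\beta_{P_a},\beta_{P_b}]$. (3) Identifying this segment with $[0,1]$ via $\beta_{P_a}\mapsto0$, $\beta_{P_b}\mapsto1$, we have $\beta_{P_a}<\rho(a)<\rho(b)<\beta_{P_b}$.
   Context: A splice diagram is a finite tree $\Gamma$ with at least one vertex of valency $\geq3$ and no vertex of valency $2$; vertices of valency $1$ are leaves, others nodes. For each node $v$ and edge $e$ at $v$ a positive integer weight $d_{v,e}$ is given; $d_v=\prod_{e\ni v}d_{v,e}$; $d_{v,u}$ is the weight at $v$ of the edge toward $u$. For distinct vertices $u,v$, $\ell_{u,v}$ is the product of all $d_{w,e}$ with $w$ a node on the geodesic $[u,v]$ and $e$ an edge at $w$ not in $[u,v]$. Edge determinant condition: $d_{u,v}d_{v,u}>\ell_{u,v}$ for every edge $[u,v]$ between nodes. With $n$ leaves, let $(e_\lambda)$ be the standard basis of $\mathbb{R}^n$ indexed by leaves, $w_\lambda=e_\lambda$, and $w_u=\sum_\lambda\ell_{u,\lambda}e_\lambda$ for a node $u$. Set $\rho(u)=w_u/|w_u|$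 ($|\cdot|$ the $1$-norm) for every vertex $u$. For a node $v$ and a set $L$ of leaves, the barycenter is $\beta^v_L=\sum_{\lambda\in L}\frac{\ell_{v,\lambda}}{\ell}e_\lambda$ with $\ell=\sum_{\lambda\in L}\ell_{v,\lambda}$. *)

From HB Require Import structures.
From mathcomp Require Import all_boot all_order all_algebra.
From mathcomp Require Import boolp.
Set Implicit Arguments. Unset Strict Implicit. Unset Printing Implicit Defensive.
Import Order.TTheory GRing.Theory Num.Theory.
Local Open Scope ring_scope.

Section SpliceDefs.
Variable V : finType.
Variable adj : rel V.

Definition valency (v : V) : nat := #|[set x | adj v x]|.
Definition leaf (v : V) : bool := valency v == 1%N.
Definition node (v : V) : bool := ~~ leaf v.

(* simple path u = x0, x1, ..., xk = v (given by its tail p) *)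
Definition gpath (u v : V) (p : seq V) : bool :=
  [&& path adj u p, last u p == v & uniq (u :: p)].

Definition on_geod (u v w : V) : bool :=
  `[< exists p, gpath u v p && (w \in u :: p) >].

Definition edge_on (u v w x : V) : bool :=
  `[< exists p, gpath u v p &&
        (((w, x) \in zip (u :: p) p) || ((x, w) \in zip (u :: p) p)) >].

Variable d : V -> V -> nat. (* d v x = weight at node v of edge [v,x] *)

Definition splice_diagram : Prop :=
  [/\ symmetric adj /\ irreflexive adj,
      (forall u v : V, exists! p, gpath u v p),
      (exists v, 3 <= valency v)%N,
      (forall v, valency v != 2%N) &
      (forall v x, node v -> adj v x -> 0 < d v x)%N].

Definition ell (u v : V) : nat :=
  (\prod_(w | node w && on_geod u v w)
     \prod_(x | adj w x && ~~ edge_on u v w x) d w x)%N.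

Definition edge_det : Prop :=
  forall u v, node u -> node v -> adj u v -> (ell u v < d u v * d v u)%N.

Variable R : realFieldType.

(* points of R^n, n = number of leaves: coordinates indexed by leaves,
   (non-leaf coordinates are set to 0) *)
Definition wvec (u : V) : {ffun V -> R} :=
  [ffun l => if leaf l then
               (if leaf u then (l == u)%:R else (ell u l)%:R) else 0].

Definition norm1 (f : {ffun V -> R}) : R := \sum_(l | leaf l) `|f l|.

Definition rho (u : V) : {ffun V -> R} :=
  [ffun l => wvec u l / norm1 (wvec u)].

Definition segpt (t : R) (p q : {ffun V -> R}) : {ffun V -> R} :=
  [ffun l => (1 - t) * p l + t * q l].

Definition bary (v : V) (L : {set V}) : {ffun V -> R} :=
  [ffun l => if (l \in L) && leaf l then
               (ell v l)%:R / (\sum_(m in L | leaf m) (ell v m)%:R) else 0].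

End SpliceDefs.

(* Across the edge [a,b], the geodesic from b to a leaf l behind a is the one
   from a prolonged by one edge, so l_{b,l} d_{a,b} = l_{a,l} B, where B is the
   product of the weights at b on the edges other than [b,a]; symmetrically
   l_{a,l} d_{b,a} = l_{b,l} A for l behind b.  Hence l_{b,.} = kA l_{a,.} on
   P_a and l_{b,.} = kB l_{a,.} on P_b with kA = B / d_{a,b} and
   kB = d_{b,a} / A.  Barycenters are invariant under such rescalings, and rho(u)
   is the average of the two barycenters weighted by the masses of l_{u,.} on
   P_a and P_b; comparing the two weightings, rho(b) lies strictly beyond
   rho(a) exactly when kA < kB, i.e. when l_{a,b} = A B < d_{a,b} d_{b,a}, which
   is the edge determinant condition. *)

From HB Require Import structures.
From mathcomp Require Import all_boot all_order all_algebra.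
From mathcomp Require Import boolp.
From mathcomp Require Import ring.
Set Implicit Arguments. Unset Strict Implicit. Unset Printing Implicit Defensive.
Import Order.TTheory GRing.Theory Num.Theory.

Section Geodesics.
Variables (V : finType) (adj : rel V).
Hypothesis adj_sym : symmetric adj.
Hypothesis adj_irr : irreflexive adj.
Hypothesis geod_unique : forall u v : V, exists! p, gpath adj u v p.

Lemma gpath_inj u v p q : gpath adj u v p -> gpath adj u v q -> p = q.
Proof. by have [r [_ Er]] := geod_unique u v => /Er <- /Er. Qed.

Lemma exists_gpath u v : exists p, gpath adj u v p.
Proof. by have [p [gp _]] := geod_unique u v; exists p. Qed.

Definition geod u v : seq V := xchoose (exists_gpath u v).

Lemma geodP u v : gpath adj u v (geod u v).
Proof. exact: xchooseP. Qed.

Lemma geodE u v p : gpath adj u v p -> geod u v = p.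
Proof. exact: gpath_inj (geodP u v). Qed.

Lemma on_geodE u v w : on_geod adj u v w = (w \in u :: geod u v).
Proof.
apply/asboolP/idP => [[p /andP[/geodE <- //]] | w_in].
by exists (geod u v); rewrite geodP.
Qed.

Lemma edge_onE u v w x :
  edge_on adj u v w x = ((w, x) \in zip (u :: geod u v) (geod u v))
                        || ((x, w) \in zip (u :: geod u v) (geod u v)).
Proof.
apply/asboolP/idP => [[p /andP[/geodE <- //]] | wx_in].
by exists (geod u v); rewrite geodP.
Qed.

Lemma mem_zip_pair (T : eqType) (x y : T) s t :
  (x, y) \in zip s t -> (x \in s) && (y \in t).
Proof.
elim: s t => [|z s IHs] [|z' t] //; rewrite [zip _ _]/= !in_cons.
by case/orP => [/eqP[-> ->] | /IHs/andP[-> ->]]; rewrite ?eqxx ?orbT.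
Qed.

Lemma edge_on_geod u v w x :
  edge_on adj u v w x -> on_geod adj u v w && on_geod adj u v x.
Proof.
have sub y : y \in geod u v -> y \in u :: geod u v by move=> yp; rewrite in_cons yp orbT.
rewrite edge_onE !on_geodE.
by case/orP => /mem_zip_pair/andP[-> /sub ->] //; rewrite andbC.
Qed.

Lemma adj_neq u v : adj u v -> u != v.
Proof. by apply: contraTneq => ->; rewrite adj_irr. Qed.

Lemma gpath_adj u v : adj u v -> gpath adj u v [:: v].
Proof. by move=> uv; rewrite /gpath /= uv eqxx !inE /= andbT adj_neq. Qed.

Lemma geod_refl u : geod u u = [::].
Proof. by apply: geodE; rewrite /gpath /= eqxx. Qed.

Lemma gpath_rev u v p : gpath adj u v p -> gpath adj v u (rev (belast u p)).
Proof.
case/and3P=> pathp /eqP <- uniqp.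
have revE : last u p :: rev (belast u p) = rev (u :: p).
  by rewrite [u :: _]lastI rev_rcons.
apply/and3P; split.
- by rewrite rev_path (eq_path (e' := adj)) // => x y; rewrite adj_sym.
- by have := congr1 (last (last u p)) revE; rewrite /= rev_cons last_rcons => ->.
- by rewrite revE rev_uniq.
Qed.

Lemma on_geod_sym u v w : on_geod adj u v w = on_geod adj v u w.
Proof.
rewrite !on_geodE (geodE (gpath_rev (geodP u v))).
have /and3P[_ /eqP lastE _] := geodP u v.
by rewrite [u :: _]lastI mem_rcons lastE !in_cons mem_rev.
Qed.

Lemma gpath_split u v p w : gpath adj u v p -> w \in u :: p ->
  exists p1 p2, [/\ p = p1 ++ p2, gpath adj u w p1 & gpath adj w v p2].
Proof.
move=> gp; rewrite in_cons => /orP[/eqP-> | wp].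
  by exists [::], p; rewrite /gpath /= eqxx.
case: (path.splitP wp) gp => p1 p2 /and3P[].
rewrite cat_path last_cat last_rcons -cat_cons cat_uniq => /andP[path1 path2].
move=> lastE /and3P[uniq1 disj uniq2].
exists (rcons p1 w), p2; split=> //.
  by rewrite /gpath path1 last_rcons eqxx -rcons_cons uniq1.
rewrite /gpath path2 lastE /= uniq2 andbT; apply: contra disj => w_p2.
by apply/hasP; exists w; rewrite // -rcons_cons mem_rcons mem_head.
Qed.

Lemma geod_cons a b l : adj a b -> on_geod adj l b a -> geod b l = a :: geod a l.
Proof.
move=> ab; rewrite on_geod_sym on_geodE => /(gpath_split (geodP b l)).
case=> p1 [p2 [-> gp1 gp2]].
have ba : adj b a by rewrite adj_sym.
by rewrite (gpath_inj gp1 (gpath_adj ba)) (geodE gp2).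
Qed.

Lemma on_geod_adjC a b l : adj a b -> on_geod adj l a b = ~~ on_geod adj l b a.
Proof.
move=> ab; case lba: (on_geod adj l b a).
  have /and3P[_ _] := geodP b l; rewrite (geod_cons ab lba) => /andP[b_notin _].
  by rewrite on_geod_sym on_geodE; apply/negbTE.
move: lba; rewrite on_geod_sym on_geodE => /negbT a_notin.
have /and3P[pathb lastb uniqb] := geodP b l.
have gpa : gpath adj a l (b :: geod b l) by rewrite /gpath /= ab pathb lastb a_notin.
by rewrite on_geod_sym on_geodE (geodE gpa) in_cons mem_head orbT.
Qed.

Lemma geod_rcons u y z :
  adj y z -> z \notin u :: geod u y -> geod u z = rcons (geod u y) z.
Proof.
move=> yz z_notin; apply: geodE; have /and3P[pathy /eqP lasty uniqy] := geodP u y.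
by rewrite /gpath rcons_path lasty yz pathy last_rcons eqxx -rcons_cons rcons_uniq z_notin.
Qed.

Lemma exists_adj_off_geod u y :
  y != u -> ~~ leaf adj y -> exists2 z, adj y z & z \notin u :: geod u y.
Proof.
move=> yu nleafy; have gpy := geodP u y.
case/lastP E: (geod u y) gpy => [|p y'] /and3P[]; first by rewrite eq_sym (negbTE yu).
rewrite rcons_path last_rcons => /andP[_ prev_y] /eqP yE _; subst y'.
set z0 := last u p in prev_y.
have [z /andP[yz zz0] | no_other] := pickP (fun z => adj y z && (z != z0)); last first.
  case/negP: nleafy; rewrite /leaf /valency (_ : [set x | adj y x] = [set z0]) ?cards1 //.
  apply/setP => x; rewrite !inE; have := no_other x; rewrite /= adj_sym in prev_y.
  by case: eqP => [-> | _]; rewrite ?prev_y ?andbT.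
exists z => //; apply/negP; rewrite -E => /(gpath_split (geodP u y)).
case=> p1 [p2 [split_y gp1 gp2]].
have zy : adj z y by rewrite adj_sym.
rewrite E (gpath_inj gp2 (gpath_adj zy)) cats1 in split_y.
rewrite /z0 (rcons_injl _ split_y) in zz0.
by case/and3P: gp1 => _ /eqP lastp1 _; rewrite lastp1 eqxx in zz0.
Qed.

(* A vertex behind a as far as possible from b is a leaf: otherwise the geodesic
   from b could be prolonged beyond it. *)
Lemma exists_leaf_behind a b : adj a b -> exists2 l, leaf adj l & on_geod adj l b a.
Proof.
move=> ab; pose P l := on_geod adj b l a.
have Pa : P a by rewrite /P on_geod_sym on_geodE mem_head.
have [l Pl l_max] := arg_maxnP (fun l => size (geod b l)) Pa.
exists l; last by rewrite on_geod_sym.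
apply/negPn/negP => nleafl.
have lb : l != b.
  by apply: contraTneq Pl => ->; rewrite /P on_geodE geod_refl inE adj_neq.
have [z lz z_notin] := exists_adj_off_geod lb nleafl.
have Pz : P z.
  move: Pl; rewrite /P !on_geodE (geod_rcons lz z_notin) -rcons_cons mem_rcons inE.
  by move=> ->; rewrite orbT.
by have := l_max z Pz; rewrite (geod_rcons lz z_notin) size_rcons /= ltnn.
Qed.

End Geodesics.

Section Ell.
Variables (V : finType) (adj : rel V).
Hypothesis adj_sym : symmetric adj.
Hypothesis adj_irr : irreflexive adj.
Hypothesis geod_unique : forall u v : V, exists! p, gpath adj u v p.
Variable d : V -> V -> nat.

Local Notation geod := (geod geod_unique).

Definition dprod_away (u v : V) : nat := \prod_(x | adj u x && (x != v)) d u x.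

Definition ell_factor (u l w : V) : nat :=
  \prod_(x | adj w x && ~~ edge_on adj u l w x) d w x.

Lemma ellE u l :
  ell adj d u l = \prod_(w | node adj w && on_geod adj u l w) ell_factor u l w.
Proof. by []. Qed.

Lemma edge_on_cons u v l w x : geod u l = v :: geod v l ->
  edge_on adj u l w x = [|| (w, x) == (u, v), (x, w) == (u, v) | edge_on adj v l w x].
Proof.
move=> geodul; rewrite !edge_onE geodul /= !in_cons -orbA.
by congr (_ || _); rewrite orbCA.
Qed.

Section ProlongedGeodesic.
Variables (u v l : V).
Hypothesis uv : adj u v.
Hypothesis geodu : geod u l = v :: geod v l.

Let vu_neq : v != u := adj_neq adj_irr (etrans (adj_sym v u) uv).

Lemma notin_prolonged_geod : u \notin v :: geod v l.
Proof. by have /and3P[_ _] := geodP geod_unique u l; rewrite geodu => /andP[]. Qed.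

Lemma edge_on_prolonged_neq x y : edge_on adj v l x y -> (x != u) && (y != u).
Proof.
case/(edge_on_geod geod_unique)/andP; rewrite !on_geodE => xin yin.
have u_notin := notin_prolonged_geod.
by apply/andP; split; [apply: contraTneq xin | apply: contraTneq yin] => ->.
Qed.

Lemma ell_factor_start : ell_factor u l u = dprod_away u v.
Proof.
apply: eq_bigl => x; rewrite (edge_on_cons _ _ geodu) !xpair_eqE eqxx.
have [/edge_on_prolonged_neq | _] := boolP (edge_on _ _ _ _ _); first by rewrite eqxx.
by rewrite [u == v]eq_sym (negbTE vu_neq) andbF !orbF.
Qed.

Lemma ell_factor_second : ell_factor v l v = d v u * ell_factor u l v.
Proof.
rewrite /ell_factor (bigD1 u) /=; last first.
  rewrite adj_sym uv; apply/negP => /edge_on_prolonged_neq.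
  by rewrite eqxx andbF.
congr (_ * _); apply: eq_bigl => x.
rewrite (edge_on_cons _ _ geodu) !xpair_eqE (negbTE vu_neq) eqxx /=.
by case: (x =P u) => [->|]; rewrite ?andbF ?andbT.
Qed.

Lemma ell_factor_rest w : w != u -> w != v -> ell_factor u l w = ell_factor v l w.
Proof.
move=> wu wv; apply: eq_bigl => x.
by rewrite (edge_on_cons _ _ geodu) !xpair_eqE (negbTE wu) (negbTE wv) !andbF.
Qed.

End ProlongedGeodesic.

(* Only the factors at u and v differ between l_{u,l} and l_{v,l}. *)
Lemma ell_adj_step u v l : node adj u -> node adj v -> adj u v ->
  on_geod adj l u v -> ell adj d u l * d v u = ell adj d v l * dprod_away u v.
Proof.
move=> nu nv uv luv; have vu : adj v u by rewrite adj_sym.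
have geodu := geod_cons adj_sym adj_irr geod_unique vu luv.
have u_notin := notin_prolonged_geod geodu.
have vu_neq := adj_neq adj_irr vu.
have on_u w : on_geod adj u l w = (w == u) || on_geod adj v l w.
  by rewrite !on_geodE geodu in_cons.
rewrite !ellE (bigD1 u) /=; last by rewrite nu on_u eqxx.
rewrite (bigD1 v) /=; last by rewrite nv on_u on_geodE mem_head orbT.
rewrite [in RHS](bigD1 v) /=; last by rewrite nv on_geodE mem_head.
rewrite (ell_factor_start uv geodu) (ell_factor_second uv geodu).
rewrite (eq_bigl (fun w => node adj w && on_geod adj v l w && (w != v))).
  rewrite (eq_bigr (ell_factor v l)); first ring.
  move=> w /andP[/andP[_ wl] wv]; apply: ell_factor_rest wv => //.
  by apply: contraTneq wl => ->; rewrite on_geodE.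
move=> w; rewrite on_u; case: (w =P u) => [->|] /=; last by rewrite andbT.
by rewrite on_geodE (negbTE u_notin) !andbF.
Qed.

Lemma ell_refl u : node adj u -> ell adj d u u = \prod_(x | adj u x) d u x.
Proof.
move=> nu; rewrite ellE (big_pred1 u) => [|w]; last first.
  by rewrite on_geodE geod_refl inE /=; case: eqP => [->|]; rewrite ?nu ?andbF.
by apply: eq_bigl => x; rewrite edge_onE geod_refl andbT.
Qed.

Hypothesis d_gt0 : forall v x, node adj v -> adj v x -> 0 < d v x.

Lemma dprod_away_gt0 u v : node adj u -> 0 < dprod_away u v.
Proof. by move=> nu; rewrite prodn_cond_gt0 // => x /andP[/d_gt0 ->]. Qed.

Lemma ell_gt0 u l : 0 < ell adj d u l.
Proof.
rewrite prodn_cond_gt0 // => w /andP[nw _].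
by rewrite prodn_cond_gt0 // => x /andP[/(d_gt0 nw) ->].
Qed.

Lemma ell_adj u v : node adj u -> node adj v -> adj u v ->
  ell adj d u v = dprod_away u v * dprod_away v u.
Proof.
move=> nu nv uv; have vu : adj v u by rewrite adj_sym.
have step := @ell_adj_step u v v nu nv uv.
rewrite on_geodE mem_head ell_refl // (bigD1 u) //= -/(dprod_away v u) in step.
apply/eqP; rewrite -(eqn_pmul2r (d_gt0 nv vu)) step //.
by apply/eqP; ring.
Qed.

End Ell.

Local Open Scope ring_scope.

Section EdgeScaling.
Variables (V : finType) (adj : rel V).
Hypothesis adj_sym : symmetric adj.
Hypothesis adj_irr : irreflexive adj.
Hypothesis geod_unique : forall u v : V, exists! p, gpath adj u v p.
Variable d : V -> V -> nat.
Hypothesis d_gt0 : forall v x, node adj v -> adj v x -> (0 < d v x)%N.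
Variable R : realFieldType.

Lemma natr_d_neq0 v x : node adj v -> adj v x -> (d v x)%:R != 0 :> R.
Proof. by move=> nv vx; rewrite pnatr_eq0 -lt0n d_gt0. Qed.

Lemma natr_dprod_away_neq0 u v : node adj u -> (dprod_away adj d u v)%:R != 0 :> R.
Proof. by move=> nu; rewrite pnatr_eq0 -lt0n dprod_away_gt0. Qed.

Lemma ell_scale_beyond u v l : node adj u -> node adj v -> adj u v ->
  on_geod adj l u v ->
  (ell adj d u l)%:R = (dprod_away adj d u v)%:R / (d v u)%:R * (ell adj d v l)%:R :> R.
Proof.
move=> nu nv uv luv; have dvu := natr_d_neq0 nv (etrans (adj_sym v u) uv).
apply: (mulIf dvu); rewrite -natrM (ell_adj_step adj_sym adj_irr geod_unique) //.
by rewrite natrM; field.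
Qed.

Lemma ell_scale_beyondV u v l : node adj u -> node adj v -> adj u v ->
  on_geod adj l u v ->
  (ell adj d v l)%:R = (d v u)%:R / (dprod_away adj d u v)%:R * (ell adj d u l)%:R :> R.
Proof.
move=> nu nv uv luv; rewrite (ell_scale_beyond nu nv uv luv).
by field; rewrite natr_dprod_away_neq0 ?natr_d_neq0 // adj_sym.
Qed.

Lemma ltr_edge_scales u v : node adj u -> node adj v -> adj u v ->
  (ell adj d u v < d u v * d v u)%N ->
  (dprod_away adj d v u)%:R / (d u v)%:R < (d v u)%:R / (dprod_away adj d u v)%:R :> R.
Proof.
move=> nu nv uv; have vu : adj v u by rewrite adj_sym.
rewrite (ell_adj adj_sym adj_irr geod_unique d_gt0) // => edge_det_uv.
have duv_gt0 : 0 < (d u v)%:R :> R by rewrite ltr0n d_gt0.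
have away_gt0 : 0 < (dprod_away adj d u v)%:R :> R by rewrite ltr0n dprod_away_gt0.
rewrite ltr_pdivrMr // mulrAC ltr_pdivlMr // -!natrM ltr_nat.
by rewrite mulnC (mulnC (d v u)).
Qed.

Lemma edge_scales a b : node adj a -> node adj b -> adj a b ->
  (ell adj d a b < d a b * d b a)%N ->
  exists kA kB : R, [/\ 0 < kA, kA < kB,
    forall l, on_geod adj l b a -> (ell adj d b l)%:R = kA * (ell adj d a l)%:R
  & forall l, on_geod adj l a b -> (ell adj d b l)%:R = kB * (ell adj d a l)%:R].
Proof.
move=> na nb ab edge_det_ab; have ba : adj b a by rewrite adj_sym.
exists ((dprod_away adj d b a)%:R / (d a b)%:R), ((d b a)%:R / (dprod_away adj d a b)%:R).
split=> [| | l | l]; first by rewrite divr_gt0 ?ltr0n ?dprod_away_gt0 ?d_gt0.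
- exact: ltr_edge_scales.
- exact: ell_scale_beyond.
- exact: ell_scale_beyondV.
Qed.

End EdgeScaling.

Section Barycenters.
Variables (V : finType) (adj : rel V) (d : V -> V -> nat) (R : realFieldType).

Definition mass (u : V) (L : {set V}) : R :=
  \sum_(m in L | leaf adj m) (ell adj d u m)%:R.

Lemma baryE u L : bary adj d R u L =
  [ffun l => if (l \in L) && leaf adj l then (ell adj d u l)%:R / mass u L else 0].
Proof. by []. Qed.

Section Scaling.
Variables (u v : V) (L : {set V}) (k : R).
Hypothesis ell_scale :
  {in L, forall l, leaf adj l -> (ell adj d v l)%:R = k * (ell adj d u l)%:R}.

Lemma mass_scale : mass v L = k * mass u L.
Proof.
by rewrite /mass mulr_sumr; apply: eq_bigr => l /andP[lL ll]; rewrite ell_scale.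
Qed.

Lemma bary_scale : k != 0 -> bary adj d R v L = bary adj d R u L.
Proof.
move=> k0; apply/ffunP => l; rewrite !baryE !ffunE mass_scale.
by case: ifP => // /andP[lL ll]; rewrite ell_scale // -mulf_div divff ?mul1r.
Qed.

End Scaling.

Lemma mass_gt0 u (L : {set V}) l : (forall m, 0 < ell adj d u m)%N ->
  l \in L -> leaf adj l -> 0 < mass u L.
Proof.
move=> ell_pos lL ll; rewrite /mass (bigD1 l) ?lL //=.
by rewrite ltr_pwDl ?sumr_ge0 // ltr0n.
Qed.

Lemma rho_segpt u (L M : {set V}) : node adj u ->
  (forall l, leaf adj l -> (l \in M) = (l \notin L)) ->
  0 < mass u L -> 0 < mass u M ->
  rho adj d R u =
    segpt (mass u M / (mass u L + mass u M)) (bary adj d R u L) (bary adj d R u M).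
Proof.
move=> nu ME mL mM; have lu : leaf adj u = false by apply/negbTE.
have norm1E : norm1 adj (wvec adj d R u) = mass u L + mass u M.
  rewrite /norm1 (bigID [in L]); congr (_ + _).
    apply: eq_big => [l | l /andP[ll _]]; first by rewrite andbC.
    by rewrite ffunE ll lu normr_nat.
  apply: eq_big => [l | l /andP[ll _]]; last by rewrite ffunE ll lu normr_nat.
  by case ll: (leaf adj l); rewrite ?andbF ?andbT // ME.
have mLM : 0 < mass u L + mass u M by rewrite addr_gt0.
apply/ffunP => l; rewrite /rho !ffunE norm1E -/(mass u L) -/(mass u M).
case ll: (leaf adj l); rewrite ?andbF ?mul0r ?mulr0 ?addr0 // !andbT lu ME //.
case: (l \in L) => /=; field; rewrite ?gt_eqF //.
Qed.

End Barycenters.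

Lemma ltr_rescaled_ratio (R : realFieldType) (x y kx ky : R) :
  0 < x -> 0 < y -> 0 < kx -> kx < ky ->
  [/\ 0 < y / (x + y), y / (x + y) < ky * y / (kx * x + ky * y)
    & ky * y / (kx * x + ky * y) < 1].
Proof.
move=> x0 y0 kx0 kxy; have ky0 : 0 < ky by apply: lt_trans kxy.
have xy0 : 0 < x + y by rewrite addr_gt0.
have kxy0 : 0 < kx * x + ky * y by rewrite addr_gt0 ?mulr_gt0.
split; first by rewrite divr_gt0.
  rewrite ltr_pdivrMr // mulrAC ltr_pdivlMr // -subr_gt0.
  have -> : ky * y * (x + y) - y * (kx * x + ky * y) = x * y * (ky - kx) by ring.
  by rewrite !mulr_gt0 ?subr_gt0.
by rewrite ltr_pdivrMr // mul1r ltr_pwDl ?mulr_gt0.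
Qed.

Unset Implicit Arguments.

Theorem lemma5p6 (R : realFieldType) (V : finType) (adj : rel V)
  (d : V -> V -> nat)
  (Hsd : splice_diagram adj d) (Hed : edge_det adj d)
  (a b : V) (Ha : node adj a) (Hb : node adj b) (Hab : adj a b) :
  let Pa := [set l | leaf adj l && on_geod adj l b a] in
  let Pb := [set l | leaf adj l && on_geod adj l a b] in
  [/\ bary adj d R a Pa = bary adj d R b Pa,
      bary adj d R a Pb = bary adj d R b Pb &
      exists ta tb : R,
        [/\ 0 < ta, ta < tb, tb < 1,
            rho adj d R a =
               segpt (R:=R) ta (bary adj d R a Pa) (bary adj d R a Pb)
          & rho adj d R b =
               segpt (R:=R) tb (bary adj d R a Pa) (bary adj d R a Pb)]].
Proof.
case: Hsd => [[adj_sym adj_irr] geod_unique _ _ d_gt0] Pa Pb.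
have Hba : adj b a by rewrite adj_sym.
have PbE l : leaf adj l -> (l \in Pb) = (l \notin Pa).
  by move=> ll; rewrite !inE ll (on_geod_adjC adj_sym adj_irr geod_unique l Hab).
have [kA [kB [kA_gt0 kA_lt_kB scaleA scaleB]]] :=
  edge_scales adj_sym adj_irr geod_unique d_gt0 R Ha Hb Hab (Hed a b Ha Hb Hab).
have scalePa : {in Pa, forall l, leaf adj l -> (ell adj d b l)%:R = kA * (ell adj d a l)%:R}.
  by move=> l; rewrite inE => /andP[_ /scaleA].
have scalePb : {in Pb, forall l, leaf adj l -> (ell adj d b l)%:R = kB * (ell adj d a l)%:R}.
  by move=> l; rewrite inE => /andP[_ /scaleB].
have [la la_leaf la_side] := exists_leaf_behind adj_sym adj_irr geod_unique Hab.
have [lb lb_leaf lb_side] := exists_leaf_behind adj_sym adj_irr geod_unique Hba.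
have mPa u : 0 < mass adj d R u Pa.
  by apply: (mass_gt0 _ (ell_gt0 d_gt0 u) _ la_leaf); rewrite inE la_leaf.
have mPb u : 0 < mass adj d R u Pb.
  by apply: (mass_gt0 _ (ell_gt0 d_gt0 u) _ lb_leaf); rewrite inE lb_leaf.
have baryPa := bary_scale scalePa (lt0r_neq0 kA_gt0).
have baryPb := bary_scale scalePb (lt0r_neq0 (lt_trans kA_gt0 kA_lt_kB)).
have [ta_gt0 ta_lt_tb tb_lt1] := ltr_rescaled_ratio (mPa a) (mPb a) kA_gt0 kA_lt_kB.
split; [exact: esym baryPa | exact: esym baryPb | do 2!eexists; split].
- exact: ta_gt0.
- exact: ta_lt_tb.
- exact: tb_lt1.
- exact: rho_segpt Ha PbE (mPa a) (mPb a).
rewrite (rho_segpt Hb PbE (mPa b) (mPb b)) baryPa baryPb.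
by rewrite (mass_scale scalePa) (mass_scale scalePb).
Qed.
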